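(* Let $M\ge 2N-1$. Then for a generic $M$-element frame $\mathcal F$ for $\mathbb R^N$, the map $\mathbb M^{\mathcal F}$ is injective; that is, there is an open dense subset of the set of $M$-element frames for $\mathbb R^N$ such that for every $\mathcal F=\{f_1,\dots,f_M\}$ in it, $|\langle x,f_k\rangle|=|\langle y,f_k\rangle|$ for all $k$ implies $y=\pm x$.
   Context: An $M$-element frame for $\mathbb R^N$ is a family $\{f_1,\dots,f_M\}\subset\mathbb R^N$ spanning $\mathbb R^N$ (equivalently an $N\times M$ real matrix of rank $N$), with the topology induced from its range of coefficients $W=\{(\langle x,f_k\rangle)_k : x\in\mathbb R^N\}$ in the Grassmannian $Gr(N,M)$ of $N$-dimensional subspaces of $\mathbb R^M$. $\mathbb M^{\mathcal F}:\mathbb R^N/\{\pm1\}\to\mathbb R^M$, $\mathbb M^{\mathcal F}(\hat x)=(|\langle x,f_k\rangle|)_{k=1}^M$. *)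

From HB Require Import structures.
From mathcomp Require Import all_boot all_order all_algebra.
From mathcomp Require Import all_classical all_reals all_analysis.
Set Implicit Arguments. Unset Strict Implicit. Unset Printing Implicit Defensive.
Import Order.TTheory GRing.Theory Num.Theory.
Import numFieldNormedType.Exports.
Local Open Scope classical_set_scope.
Local Open Scope ring_scope.

(* An M-element frame for R^N: an N x M real matrix F of rank N; its columns
   are f_1,...,f_M.  For x : 'rV_N, (x *m F) 0 k = <x, f_k>. *)
Definition is_frame {R : realType} {N M : nat} (F : 'M[R]_(N, M)) : Prop :=
  \rank F = N.

(* The range of coefficients W = { x *m F } is the row space of F.  We
   represent the point W of the Grassmannian Gr(N,M) by the orthogonal
   projection matrix of R^M onto W (a symmetric idempotent M x M matrix of
   rank N); Gr(N,M) carries the topology of these matrices in 'M[R]_M. *)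
Definition frame_proj {R : realType} {N M : nat} (F : 'M[R]_(N, M)) : 'M[R]_M :=
  F^T *m invmx (F *m F^T) *m F.

(* The set of M-element frames for R^N, with the topology induced from
   Gr(N,M) via F |-> W: open sets are the preimages of open sets. *)
Definition frame_open {R : realType} (N M : nat) (U : set 'M[R]_(N, M)) : Prop :=
  exists V : set 'M[R]_M, open V /\
    U = [set F | is_frame F /\ V (frame_proj F)].

Definition frame_dense {R : realType} (N M : nat) (U : set 'M[R]_(N, M)) : Prop :=
  forall V : set 'M[R]_M, open V ->
    (exists F : 'M[R]_(N, M), is_frame F /\ V (frame_proj F)) ->
    exists F, U F /\ V (frame_proj F).

Definition phase_retrievable {R : realType} {N M : nat} (F : 'M[R]_(N, M)) : Prop :=
  forall x y : 'rV[R]_N,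
    (forall k : 'I_M, `|(x *m F) 0 k| = `|(y *m F) 0 k|) -> y = x \/ y = - x.

(* A frame is full spark when every N of its M vectors are linearly
   independent.  If |<x, f_k>| = |<y, f_k>| for all k and M >= 2N - 1, then
   either <y - x, f_k> or <y + x, f_k> vanishes for at least N indices k, so
   full spark forces y = x or y = -x.  Full spark frames form an open dense
   set: it is the preimage of the open set of projections onto W none of whose
   N-column families is degenerate, and on the segment from any frame to a
   Vandermonde frame the product of all maximal minors is a nonzero
   polynomial in the parameter, hence nonzero at parameters arbitrarily close
   to the starting frame, whose projection moves continuously. *)

From HB Require Import structures.
From mathcomp Require Import all_boot all_order all_algebra.
From mathcomp Require Import all_classical all_reals all_analysis.
From mathcomp Require Import zify.
Import Order.TTheory GRing.Theory Num.Theory.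
Import numFieldNormedType.Exports.
Local Open Scope classical_set_scope.
Local Open Scope ring_scope.

Section MatrixCvg.
Context {R : numFieldType} {T : Type} {F : set_system T} {FF : Filter F}.

Lemma cvg_mxP m n (f : T -> 'M[R]_(m, n)) (A : 'M[R]_(m, n)) :
  f x @[x --> F] --> A <-> forall i j, f x i j @[x --> F] --> A i j.
Proof.
split=> [fA i j | fA].
  exact: (continuous_cvg _ (@coord_continuous R m n i j A) fA).
move=> S [P PA /filterS]; apply.
by do 2 apply: filter_forall => ?; apply: fA.
Qed.

Lemma cvg_sumr (I : Type) (r : seq I) (P : pred I) (f : I -> T -> R) (a : I -> R) :
  (forall i, f i x @[x --> F] --> a i) ->
  \sum_(i <- r | P i) f i x @[x --> F] --> \sum_(i <- r | P i) a i.
Proof. by move=> fa; apply: cvg_big => //; exact: add_continuous. Qed.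

Lemma cvg_prodr (I : Type) (r : seq I) (P : pred I) (f : I -> T -> R) (a : I -> R) :
  (forall i, f i x @[x --> F] --> a i) ->
  \prod_(i <- r | P i) f i x @[x --> F] --> \prod_(i <- r | P i) a i.
Proof. by move=> fa; apply: cvg_big => //; exact: mul_continuous. Qed.

Lemma cvg_mulmx {m n p} {f : T -> 'M[R]_(m, n)} {g : T -> 'M[R]_(n, p)}
    {A : 'M[R]_(m, n)} {B : 'M[R]_(n, p)} :
  f x @[x --> F] --> A -> g x @[x --> F] --> B ->
  f x *m g x @[x --> F] --> A *m B.
Proof.
move=> /cvg_mxP fA /cvg_mxP gB; apply/cvg_mxP => i j.
under eq_cvg do rewrite mxE; rewrite mxE.
by apply: cvg_sumr => k; apply: cvgM.
Qed.

Lemma cvg_trmx {m n} {f : T -> 'M[R]_(m, n)} {A : 'M[R]_(m, n)} :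
  f x @[x --> F] --> A -> (f x)^T @[x --> F] --> A^T.
Proof.
move=> /cvg_mxP fA; apply/cvg_mxP => i j.
by under eq_cvg do rewrite mxE; rewrite mxE; exact: fA.
Qed.

Lemma cvg_mxsub {m n m' n'} (r : 'I_m' -> 'I_m) (c : 'I_n' -> 'I_n)
    {f : T -> 'M[R]_(m, n)} {A : 'M[R]_(m, n)} :
  f x @[x --> F] --> A -> mxsub r c (f x) @[x --> F] --> mxsub r c A.
Proof.
move=> /cvg_mxP fA; apply/cvg_mxP => i j.
by under eq_cvg do rewrite mxE; rewrite mxE; exact: fA.
Qed.

Lemma cvg_det {n} {f : T -> 'M[R]_n} {A : 'M[R]_n} :
  f x @[x --> F] --> A -> \det (f x) @[x --> F] --> \det A.
Proof.
move=> /cvg_mxP fA; apply: cvg_sumr => s.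
by apply: cvgM; [exact: cvg_cst | apply: cvg_prodr => i].
Qed.

Lemma cvg_adj {n} {f : T -> 'M[R]_n} {A : 'M[R]_n} :
  f x @[x --> F] --> A -> \adj (f x) @[x --> F] --> \adj A.
Proof.
move=> fA; apply/cvg_mxP => i j.
under eq_cvg do rewrite /adjugate mxE; rewrite /adjugate mxE.
exact: cvgM (cvg_cst _) (cvg_det (cvg_mxsub _ _ (cvg_mxsub _ _ fA))).
Qed.

Lemma cvg_invmx {n} {f : T -> 'M[R]_n} {A : 'M[R]_n} : A \in unitmx ->
  f x @[x --> F] --> A -> invmx (f x) @[x --> F] --> invmx A.
Proof.
rewrite unitmxE unitfE => detA fA.
have detf := cvg_det fA.
rewrite /invmx unitmxE unitfE detA.
apply: cvg_trans (cvgZ (cvgV detA detf) (cvg_adj fA)); apply: near_eq_cvg.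
near=> x; rewrite unitmxE unitfE ifT //; near: x; exact: cvgr_neq0 detf detA.
Unshelve. all: by end_near. Qed.

End MatrixCvg.

Lemma frame_proj_continuous {R : realType} {N M} {F : 'M[R]_(N, M)} :
  F *m F^T \in unitmx -> {for F, continuous frame_proj}.
Proof.
move=> FFu; have FF : x @[x --> F] --> F := cvg_id.
exact: cvg_mulmx (cvg_mulmx (cvg_trmx FF)
  (cvg_invmx FFu (cvg_mulmx FF (cvg_trmx FF)))) FF.
Qed.

Section Gram.
Context {R : realFieldType}.

Lemma mulmx_tr_eq0 m n (A : 'M[R]_(m, n)) : (A *m A^T == 0) = (A == 0).
Proof.
apply/eqP/eqP => [AAt0 | ->]; last by rewrite mul0mx.
have sq k i : A i k * A^T k i = A i k ^+ 2 by rewrite mxE expr2.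
apply/matrixP => i j; apply/eqP; rewrite mxE -sqrf_eq0 -sq; apply/eqP.
have : (A *m A^T) i i = 0 by rewrite AAt0 mxE.
by rewrite mxE => /psumr_eq0P -> // k _; rewrite sq sqr_ge0.
Qed.

Lemma row_free_gram_unit {m n} {F : 'M[R]_(m, n)} :
  row_free F -> F *m F^T \in unitmx.
Proof.
move=> F_free; rewrite -row_free_unit -kermx_eq0.
set K := kermx _; have KF0 : K *m F *m (K *m F)^T = 0.
  by rewrite trmx_mul !mulmxA -(mulmxA K) mulmx_ker mul0mx.
by rewrite -(mulmx_free_eq0 _ F_free) -mulmx_tr_eq0 KF0.
Qed.

End Gram.

Definition full_spark {R : fieldType} {N M : nat} (F : 'M[R]_(N, M)) : Prop :=
  forall f : {ffun 'I_N -> 'I_M}, injectiveb f -> \det (colsub f F) != 0.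

Lemma exists_injection_in {T : finType} {n : nat} {S : {set T}} :
  (n <= #|S|)%N -> exists f : {ffun 'I_n -> T}, injectiveb f /\ forall i, f i \in S.
Proof.
move=> nS; exists [ffun i => enum_val (widen_ord nS i)]; split.
  by apply/injectiveP => i j; rewrite !ffunE => /enum_val_inj/(congr1 val)/= /val_inj.
by move=> i; rewrite ffunE enum_valP.
Qed.

Section FullSpark.
Context {R : fieldType} {N M : nat} {F : 'M[R]_(N, M)}.
Hypothesis F_spark : full_spark F.

Lemma full_spark_kernel {z : 'rV[R]_N} {f : {ffun 'I_N -> 'I_M}} :
  injectiveb f -> (forall i, (z *m F) 0 (f i) = 0) -> z = 0.
Proof.
move=> f_inj zf0; have Ff_free : row_free (colsub f F).
  by rewrite row_free_unit unitmxE unitfE F_spark.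
apply/eqP; rewrite -(mulmx_free_eq0 _ Ff_free); apply/eqP/rowP => j.
by rewrite mulmx_colsub mxE zf0 mxE.
Qed.

Lemma full_spark_row_free : (N <= M)%N -> row_free F.
Proof.
move=> NM; pose f := [ffun i : 'I_N => widen_ord NM i].
have f_inj : injectiveb f.
  by apply/injectiveP => i j; rewrite !ffunE => /(congr1 val)/= /val_inj.
have Ff_unit : colsub f F \in unitmx by rewrite unitmxE unitfE F_spark.
rewrite /row_free eqn_leq rank_leq_row -{1}(mxrank_unit Ff_unit).
by rewrite -[F in colsub f F]mulmx1 -mulmx_colsub mxrankM_maxl.
Qed.

End FullSpark.

Lemma full_spark_phase_retrievable (R : realType) N M (F : 'M[R]_(N, M)) :
  (2 * N - 1 <= M)%N -> full_spark F -> phase_retrievable F.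
Proof.
move=> MN F_spark x y xFyF.
pose S := [set k | (y *m F) 0 k == (x *m F) 0 k]%SET.
have [NS | SN] := leqP N #|S|.
  have [f [f_inj fS]] := exists_injection_in NS.
  left; apply/eqP; rewrite -subr_eq0; apply/eqP.
  apply: (full_spark_kernel F_spark f_inj) => i; move: (fS i).
  by rewrite inE mulmxBl => /eqP yx; rewrite [LHS]mxE yx [X in _ + X]mxE subrr.
have /exists_injection_in [f [f_inj fSC]] : (N <= #|~: S|)%N.
  by move: (cardsC S); rewrite card_ord; lia.
right; apply/eqP; rewrite -addr_eq0; apply/eqP.
apply: (full_spark_kernel F_spark f_inj) => i; move: (fSC i) (xFyF (f i)).
rewrite !inE mulmxDl => /negbTE yx /eqP; rewrite eq_sym eqr_norm2 yx => /eqP yx'.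
by rewrite [LHS]mxE yx' addNr.
Qed.

(* Independence of N columns is witnessed by a nonzero N-minor, which makes
   the condition visibly open. *)
Definition indep_cols {R : fieldType} (N : nat) {K M : nat} (P : 'M[R]_(K, M)) : Prop :=
  forall f : {ffun 'I_N -> 'I_M}, injectiveb f ->
    exists g : {ffun 'I_N -> 'I_K}, \det (rowsub g (colsub f P)) != 0.

Lemma indep_cols_mulmx_full_spark {R : fieldType} {K N M : nat}
    (X : 'M[R]_(K, N)) (F : 'M[R]_(N, M)) :
  indep_cols N (X *m F) -> full_spark F.
Proof.
move=> XF_indep f f_inj; have [g] := XF_indep f f_inj.
by rewrite -mulmx_colsub -mul_rowsub_mx det_mulmx mulf_eq0 negb_or => /andP[].
Qed.

Lemma full_spark_indep_cols_proj (R : realType) N M (F : 'M[R]_(N, M)) :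
  (N <= M)%N -> full_spark F -> indep_cols N (frame_proj F).
Proof.
move=> NM F_spark f f_inj; exists f.
have FF_unit := row_free_gram_unit (full_spark_row_free F_spark NM).
have tr_colsub : rowsub f F^T = (colsub f F)^T by apply/matrixP => i j; rewrite !mxE.
rewrite /frame_proj -mulmx_colsub -!mul_rowsub_mx tr_colsub !det_mulmx det_tr det_inv.
by rewrite !mulf_neq0 ?F_spark // invr_eq0 -unitfE -unitmxE.
Qed.

Lemma continuous_minor {R : numFieldType} {k m n} (r : 'I_k -> 'I_m) (c : 'I_k -> 'I_n) :
  continuous (fun A : 'M[R]_(m, n) => \det (rowsub r (colsub c A))).
Proof.
move=> A; have idA : x @[x --> A] --> A := cvg_id.
exact: cvg_det (cvg_mxsub _ _ (cvg_mxsub _ _ idA)).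
Qed.

Lemma open_indep_cols (R : realFieldType) N K M :
  open [set P : 'M[R]_(K, M) | indep_cols N P].
Proof.
rewrite openE => P P_indep.
apply: (@filter_forall _ _ (fun f : {ffun 'I_N -> 'I_M} => [set Q | injectiveb f ->
  exists g : {ffun 'I_N -> 'I_K}, \det (rowsub g (colsub f Q)) != 0]) (nbhs P) _) => f.
have [f_inj|f_ninj] := boolP (injectiveb f); last by apply: filterE.
have [g Pg] := P_indep f f_inj.
apply: (@filterS _ (nbhs P) _ _ _ _ (continuous_minor g f P _
  (open_nbhs_nbhs (conj (@open_neq R 0) Pg)))) => Q Qg _.
by exists g.
Qed.

Lemma full_spark_vandermonde (R : numFieldType) N M :
  full_spark (\matrix_(i < N, j < M) (j.+1)%:R ^+ i : 'M[R]_(N, M)).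
Proof.
move=> f /injectiveP f_inj.
have -> : colsub f (\matrix_(i < N, j < M) (j.+1)%:R ^+ i) =
    Vandermonde N (\row_j ((f j).+1)%:R : 'rV[R]_N).
  by apply/matrixP => i j; rewrite !mxE.
rewrite det_Vandermonde; apply/prodf_neq0 => i _; apply/prodf_neq0 => j ij.
rewrite !mxE subr_eq0 eqr_nat eqSS; apply: contraTneq ij => /val_inj/f_inj ->.
by rewrite ltnn.
Qed.

Lemma exists_nonroot_itv {R : realFieldType} {p : {poly R}} {e : R} :
  p != 0 -> 0 < e -> exists2 t, 0 < t < e & ~~ root p t.
Proof.
move=> p0 e0; have [//|no_nonroot] := pselect (exists2 t, 0 < t < e & ~~ root p t).
pose ts := [seq e / k.+2%:R | k <- iota 0 (size p)].
have ts_roots : all (root p) ts.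
  apply/allP => _ /mapP[k _ ->]; apply/negPn/negP => p_nroot; apply: no_nonroot.
  exists (e / k.+2%:R) => //.
  by rewrite divr_gt0 ?ltr0n //= ltr_pdivrMr ?ltr0n // ltr_pMr // ltr1n.
have ts_uniq : uniq ts.
  rewrite map_inj_uniq ?iota_uniq // => a b /(mulfI (lt0r_neq0 e0))/invr_inj.
  by move/eqP; rewrite eqr_nat !eqSS => /eqP.
by have := max_poly_roots p0 ts_roots ts_uniq; rewrite size_map size_iota ltnn.
Qed.

Lemma full_spark_segment {R : realFieldType} {N M} (F A : 'M[R]_(N, M)) {e : R} :
  full_spark A -> 0 < e -> exists2 t, 0 < t < e & full_spark (F + t *: (A - F)).
Proof.
move=> A_spark e0.
pose P : 'M[{poly R}]_(N, M) := map_mx polyC F + 'X *: map_mx polyC (A - F).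
have P_eval t : map_mx (horner_eval t) P = F + t *: (A - F).
  by apply/matrixP => i j; rewrite !mxE /horner_eval !hornerE.
pose q := \prod_(f : {ffun 'I_N -> 'I_M} | injectiveb f) \det (colsub f P).
have q_eval t :
    q.[t] = \prod_(f : {ffun 'I_N -> 'I_M} | injectiveb f) \det (colsub f (F + t *: (A - F))).
  rewrite -[q.[t]]/(horner_eval t q) rmorph_prod; apply: eq_bigr => f _.
  by rewrite -det_map_mx map_mxsub P_eval.
have q_neq0 : q != 0.
  apply: contra_neq (_ : q.[1] != 0) => [->|]; first by rewrite horner0.
  by rewrite q_eval scale1r addrC subrK; apply/prodf_neq0.
have [t t_itv qt] := exists_nonroot_itv q_neq0 e0.
by exists t => //; apply/prodf_neq0; rewrite -q_eval.
Qed.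

Lemma frame_dense_full_spark (R : realType) N M :
  (N <= M)%N -> frame_dense [set F : 'M[R]_(N, M) | full_spark F].
Proof.
move=> NM V V_open [F [F_frame VF]].
pose A : 'M[R]_(N, M) := \matrix_(i, j) (j.+1)%:R ^+ i.
pose seg t := F + t *: (A - F).
have seg_cvg : seg t @[t --> 0] --> F.
  rewrite -[X in _ --> X]addr0 -(scale0r (A - F)).
  exact: cvgD (cvg_cst F) (cvgZ cvg_id (cvg_cst (A - F))).
have FF_unit : F *m F^T \in unitmx by apply/row_free_gram_unit/eqP.
have /(_ _ (open_nbhs_nbhs (conj V_open VF))) /nbhs_ballP[e e0 eV] :=
  continuous_cvg (nbhs_filter (0 : R)) (frame_proj_continuous FF_unit) seg_cvg.
have [t t_itv t_spark] := full_spark_segment F A (full_spark_vandermonde R N M) e0.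
exists (seg t); split => //; apply: eV.
by rewrite -ball_normE /ball_ /= sub0r normrN gtr0_norm //; case/andP: t_itv.
Qed.

Theorem theorem2p2 (R : realType) (N M : nat) :
  (2 * N - 1 <= M)%N ->
  exists U : set 'M[R]_(N, M),
    U `<=` [set F | is_frame F] /\ frame_open U /\ frame_dense U /\
    (forall F, U F -> phase_retrievable F).
Proof.
move=> MN; have NM : (N <= M)%N by lia.
exists [set F | full_spark F]; split; last split; last split.
- by move=> F F_spark; apply/eqP/(full_spark_row_free F_spark).
- exists [set P | indep_cols N P]; split; first exact: open_indep_cols.
  apply/seteqP; split=> F.
    move=> F_spark; split; last exact: full_spark_indep_cols_proj.
    exact/eqP/(full_spark_row_free F_spark).
  by case=> _; apply: indep_cols_mulmx_full_spark.
- exact: frame_dense_full_spark.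
- by move=> F; apply: full_spark_phase_retrievable.
Qed.
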